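(* In the setting below, let $Z$ be a chain and let $P\in\mathcal{R}\cup\mathcal{B}$. If two vertices $v,v'$ both lie on $Z$ and on $P$, and $v$ appears before $v'$ on $Z$, then $v$ appears before $v'$ on $P$ (with $P$ oriented from $S_1$ to $T_1$ if red, from $S_2$ to $T_2$ if blue).
   Context: Setting: $G$ is a graph; $S_1,T_1,S_2,T_2\subseteq V(G)$ are pairwise disjoint sets of $k$ vertices each, all of degree $1$ in $G$, with $(S_1,T_1)$ and $(S_2,T_2)$ each routable in $G$ (connected by $k$ node-disjoint paths). $H$ is an $(S_1,T_1,S_2,T_2)$-minimal minor of $G$: a minor of $G$ containing the vertices of $S_1\cup T_1\cup S_2\cup T_2$ as vertices (each with singleton branch set), in which both pairs are routable, and such that deleting or contracting any edge of $H$ destroys one of these properties. $\mathcal{R}$ (red paths) is a set of $k$ node-disjoint paths routing $(S_1,T_1)$ in $H$, and $\mathcal{B}$ (blue paths) is a set of $k$ node-disjoint paths routing $(S_2,T_2)$ in $H$. $\tilde H$ is the directed graph on $V(H)$ whose edges are the edges of red paths directed from $S_1$ toward $T_1$ (red edges) and the edges of blue paths directed from $S_2$ toward $T_2$ (blue edges). A chain is a directed (not necessarily simple) walk $e_1,\dots,e_r$ in $\tilde H$ whose edges alternate in color. *)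

From HB Require Import structures.
From mathcomp Require Import all_boot.
Set Implicit Arguments. Unset Strict Implicit. Unset Printing Implicit Defensive.

Definition simple_graph (V : finType) (E : rel V) : Prop :=
  symmetric E /\ irreflexive E.

Definition linkage (W : finType) (F : rel W) (S T : {set W}) (k : nat)
    (L : seq (seq W)) : Prop :=
  size L = k /\
  (forall p, p \in L -> exists x s,
      [/\ p = x :: s, path F x s, uniq p, x \in S & last x s \in T]) /\
  (forall i j, i < k -> j < k -> i != j ->
      forall x, x \in nth [::] L i -> x \notin nth [::] L j).

Definition routable (W : finType) (F : rel W) (S T : {set W}) (k : nat) : Prop :=
  exists L, linkage F S T k L.

Definition minor_model (V W : finType) (E : rel V) (F : rel W)
    (beta : W -> {set V}) : Prop :=
  [/\ (forall w, beta w != set0),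
      (forall w w', w != w' -> [disjoint beta w & beta w']),
      (forall w a b, a \in beta w -> b \in beta w ->
         connect (fun x y => [&& E x y, x \in beta w & y \in beta w]) a b)
    & (forall w w', F w w' -> exists a b, [/\ a \in beta w, b \in beta w' & E a b])].

Definition terminals (V : finType) (S1 T1 S2 T2 : {set V}) : {set V} :=
  S1 :|: T1 :|: S2 :|: T2.

(* (W,F), with terminal x of G identified with the vertex h x, is a minor of
   (V,E) containing the terminals with singleton branch sets, in which both
   pairs are routable. *)
Definition good_minor (V : finType) (E : rel V) (S1 T1 S2 T2 : {set V}) (k : nat)
    (W : finType) (F : rel W) (h : V -> W) : Prop :=
  exists beta : W -> {set V},
    [/\ minor_model E F beta,
        (forall x, x \in terminals S1 T1 S2 T2 -> beta (h x) = [set x]),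
        routable F (h @: S1) (h @: T1) k
      & routable F (h @: S2) (h @: T2) k].

Definition del_edge (W : finType) (F : rel W) (u v : W) : rel W :=
  fun x y => F x y && ~~ (((x == u) && (y == v)) || ((x == v) && (y == u))).

(* Contracting the edge uv: v is merged into u (the merged vertex is u). *)
Definition contr_edge (W : finType) (F : rel W) (u v : W) : rel {w : W | w != v} :=
  fun x y => (val x != val y) &&
    [|| F (val x) (val y), (val x == u) && F v (val y) | (val y == u) && F (val x) v].

(* (S1,T1,S2,T2)-minimal minor: good, and deleting or contracting any edge
   destroys goodness (terminals keep their identity; contracting an edge so
   that a terminal disappears destroys it automatically). Edges are quantified
   as ordered pairs, so both ways of naming the merged vertex are covered. *)
Definition minimal_minor (V : finType) (E : rel V) (S1 T1 S2 T2 : {set V}) (k : nat)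
    (W : finType) (F : rel W) (h : V -> W) : Prop :=
  good_minor E S1 T1 S2 T2 k F h /\
  forall u v, F u v ->
    ~ good_minor E S1 T1 S2 T2 k (del_edge F u v) h /\
    ((exists2 x, x \in terminals S1 T1 S2 T2 & h x = v) \/
     forall h' : V -> {w : W | w != v},
       (forall x, x \in terminals S1 T1 S2 T2 -> val (h' x) = h x) ->
       ~ @good_minor V E S1 T1 S2 T2 k {w : W | w != v} (@contr_edge W F u v) h').

Definition arc_of (W : finType) (L : seq (seq W)) (x y : W) : Prop :=
  exists2 p, p \in L &
    exists i, [/\ i.+1 < size p, nth x p i = x & nth x p i.+1 = y].

(* colour true = red (edges of R), false = blue (edges of B). *)
Definition colored_arc (W : finType) (R B : seq (seq W)) (c : bool) (x y : W) : Prop :=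
  if c then arc_of R x y else arc_of B x y.

(* x :: s is the vertex sequence of a chain whose first edge has colour c:
   a directed walk in H~ whose edge colours alternate. *)
Fixpoint chain (W : finType) (R B : seq (seq W)) (c : bool) (x : W) (s : seq W) : Prop :=
  match s with
  | [::] => True
  | y :: s' => colored_arc R B c x y /\ chain R B (~~ c) y s'
  end.

From HB Require Import structures.
From mathcomp Require Import all_boot zify.
Set Implicit Arguments. Unset Strict Implicit. Unset Printing Implicit Defensive.

(* Suppose v' comes before v on a red path although v comes before v' on the
   chain Z. The red arcs of Z between v and v', together with the red segment
   from v' to v, form an alternating cycle: pairs (a_t, b_t), a_t before b_t on
   a red path, with b_t a_{t+1} a blue edge. A shortest such cycle meets each
   red path at most once, and then every red path carrying some b_t can be
   rerouted: follow the red path of a_{t+1} up to a_{t+1}, cross the blue edge,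
   and continue from b_t. The new red linkage avoids the red edge leaving a_0.
   That edge is not blue: its ends are inner vertices of both linkages, hence
   no terminals (these have degree one), so it could be contracted. Hence it
   can be deleted, contradicting minimality. Blue paths are handled by swapping
   the colours. *)

Section Adjacency.
Variable T : eqType.
Implicit Types (r : rel T) (s : seq T) (x y : T).

Definition adjacent s x y := (x, y) \in zip s (behead s).

Lemma adjacentP s x y :
  reflect (exists s1 s2, s = s1 ++ x :: y :: s2) (adjacent s x y).
Proof.
rewrite /adjacent; elim: s => [|a s IH] /=; first by constructor=> [[[|? ?] [? ?]]].
case: s IH => [|b s] IH /=; first by constructor=> [[[|? [|? ?]] [? ?]]].
rewrite inE; apply: (iffP orP) => [[/eqP [-> ->]|/IH [s1 [s2 ->]]]|[[|a' s1] [s2]]].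
- by exists [::], s.
- by exists (a :: s1), s2.
- by case=> -> -> _; left.
- by case=> _ e; right; apply/IH; exists s1, s2.
Qed.

Lemma adjacent_mem s x y : adjacent s x y -> (x \in s) && (y \in s).
Proof. by case/adjacentP=> s1 [s2 ->]; rewrite !mem_cat !inE !eqxx !orbT. Qed.

Lemma sorted_adjacent r s x y : sorted r s -> adjacent s x y -> r x y.
Proof.
move=> srt /adjacentP[s1 [s2 e]]; move: srt.
by rewrite e sorted_cat_cons => /andP[_] /= /andP[].
Qed.

Lemma adjacent_nth x0 s i :
  i.+1 < size s -> adjacent s (nth x0 s i) (nth x0 s i.+1).
Proof.
move=> lt; apply/adjacentP; exists (take i s), (drop i.+2 s).
by rewrite -{1}(cat_take_drop i s) (drop_nth x0) ?(ltn_trans _ lt) // (drop_nth x0).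
Qed.

Lemma index_drop_uniq s m x : uniq s -> x \in drop m s -> m <= index x s.
Proof.
move=> us xd; rewrite leqNgt -in_take ?(mem_drop xd) //; apply/negP=> xt.
move: us; rewrite -(cat_take_drop m s) cat_uniq => /and3P[_ /hasPn/(_ x xd)].
by rewrite xt.
Qed.

End Adjacency.

Lemma uniq_cat_cons2 (T : eqType) (s1 s2 : seq T) x y : uniq (s1 ++ x :: y :: s2) ->
  [/\ x \notin s1, x \notin s2, y \notin s1 & y \notin s2].
Proof.
rewrite cat_uniq => /and3P[_ /hasPn H] /and3P[]; rewrite inE negb_or => /andP[_ ->] -> _.
by rewrite (H x) ?(H y) // !inE eqxx ?orbT.
Qed.

Lemma filter_predC1_id (T : eqType) (s : seq T) v : v \notin s -> filter (predC1 v) s = s.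
Proof. by move=> vs; apply/all_filterP/allP=> w ws /=; apply: contraNneq vs => <-. Qed.

Lemma last_filter (T : eqType) (a : pred T) x s :
  a x -> a (last x s) -> last x (filter a s) = last x s.
Proof.
move=> ax; case/lastP: s => [|s y] //; rewrite last_rcons filter_rcons => ->.
by rewrite last_rcons.
Qed.

Lemma path_end_of_unique_nbr (W : eqType) (F : rel W) p z :
  symmetric F -> sorted F p -> uniq p -> z \in p ->
  (forall a b, F z a -> F z b -> a = b) -> z = head z p \/ z = last z p.
Proof.
move=> sF + + zp Hz; case/splitPr: zp => p1 p2.
case/lastP: p1 => [|p1 a]; first by left.
case: p2 => [|b p2]; first by right; rewrite last_cat.
rewrite cat_rcons => sp up; suff ab : a = b.
  by move: up; rewrite ab cat_uniq => /and3P[_ _] /=; rewrite !inE eqxx orbT.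
apply: Hz.
  by rewrite sF; apply: (sorted_adjacent sp); apply/adjacentP; exists p1, (b :: p2).
by apply: (sorted_adjacent sp); apply/adjacentP; exists (rcons p1 a), p2; rewrite cat_rcons.
Qed.

Lemma sorted_splice (T : Type) (r : rel T) x0 (s1 s2 : seq T) m j :
  m < size s1 -> j < size s2 -> sorted r (take m.+1 s1) -> sorted r (drop j s2) ->
  r (nth x0 s1 m) (nth x0 s2 j) -> sorted r (take m.+1 s1 ++ drop j s2).
Proof.
move=> ms1 js2; rewrite (take_nth x0 ms1) (drop_nth x0 js2) sorted_cat_cons => + /= -> rxy.
by case: (take m s1) => [|y s] /=; rewrite ?rcons_path ?last_rcons rxy ?andbT.
Qed.

Lemma sorted_rcons2 (T : Type) (r : rel T) s a x :
  sorted r (rcons (rcons s a) x) = sorted r (rcons s a) && r a x.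
Proof. by case: s => [|b s] /=; rewrite ?andbT // rcons_path last_rcons. Qed.

Lemma head_take_cat (T : Type) x0 (s1 s2 : seq T) m :
  0 < size s1 -> head x0 (take m.+1 s1 ++ s2) = head x0 s1.
Proof. by case: s1. Qed.

Lemma last_cat_drop (T : Type) x0 (s1 s2 : seq T) j :
  j < size s2 -> last x0 (s1 ++ drop j s2) = last x0 s2.
Proof. by move=> js; rewrite -[in RHS](cat_take_drop j s2) !last_cat (drop_nth x0 js). Qed.

Lemma cycle_nth (T : Type) (e : rel T) x0 s t : cycle e s -> t < size s ->
  e (nth x0 s t) (nth x0 s (t.+1 %% size s)).
Proof.
case: s => [|x s] //= /(pathP x0) H; rewrite -rcons_cons in H.
have {}H i : i < (size s).+1 -> e (nth x0 (x :: s) i) (nth x0 (rcons s x) i).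
  by move=> lt; have := H i; rewrite size_rcons nth_rcons lt => ->.
rewrite ltnS leq_eqVlt => /orP[/eqP ->|lt].
  by have := H _ (ltnSn _); rewrite modnn nth_rcons ltnn eqxx.
by rewrite modn_small //; have := H _ (ltnW lt); rewrite nth_rcons lt.
Qed.

Lemma not_uniq_map_split (T1 T2 : eqType) (f : T1 -> T2) (c : seq T1) :
  ~~ uniq (map f c) -> exists A x B y C, c = A ++ x :: B ++ y :: C /\ f x = f y.
Proof.
elim: c => [|z c IH] //=; rewrite negb_and negbK => /orP[/mapP [y yc fz]|nu].
- by case/splitPr: yc => B C; exists [::], z, B, y, C.
- by have [A [x [B [y [C [-> fe]]]]]] := IH nu; exists (z :: A), x, B, y, C.
Qed.

(** * Linkages *)

Definition path_index (W : eqType) (L : seq (seq W)) (x : W) : nat :=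
  find (fun p => x \in p) L.

Definition precedes (W : eqType) (L : seq (seq W)) (x y : W) : Prop :=
  exists2 p, p \in L & [/\ x \in p, y \in p & index x p < index y p].

Definition path_edge (W : eqType) (L : seq (seq W)) (x y : W) : bool :=
  has (fun p => adjacent p x y || adjacent p y x) L.

Lemma path_edgeC (W : eqType) (L : seq (seq W)) x y : path_edge L x y = path_edge L y x.
Proof. by apply: eq_has => p; rewrite orbC. Qed.

Section Linkage.
Variables (W : finType) (F : rel W) (S T : {set W}) (k : nat) (L : seq (seq W)).
Hypothesis HL : linkage F S T k L.

Lemma linkage_pathP p : p \in L ->
  [/\ sorted F p, uniq p, forall x0, head x0 p \in S, forall x0, last x0 p \in T
    & p != [::]].
Proof. by case: HL => _ [Hp _] /Hp[x [s [-> ps up xS lT]]]. Qed.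

Lemma mem_nth_linkage i : i < k -> nth [::] L i \in L.
Proof. by case: HL => sz _ ik; rewrite mem_nth ?sz. Qed.

Lemma linkage_mem_nth_lt i x : x \in nth [::] L i -> i < k.
Proof.
case: HL => <- _; rewrite ltnNge; apply: contraL => Li.
by rewrite nth_default.
Qed.

Lemma linkage_nth_inj i j x : i < k -> j < k ->
  x \in nth [::] L i -> x \in nth [::] L j -> i = j.
Proof.
case: HL => _ [_ Hd] ik jk xi xj; apply/eqP/negPn/negP=> nij.
by move: (Hd i j ik jk nij x xi); rewrite xj.
Qed.

Lemma path_indexP p x : p \in L -> x \in p ->
  path_index L x < k /\ nth [::] L (path_index L x) = p.
Proof.
move=> pL xp; have [sz _] := HL.
have hx : has (fun p => x \in p) L by apply/hasP; exists p.
have pk : path_index L x < k by rewrite -sz -has_find.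
have ip : index p L < k by rewrite -sz index_mem.
split=> //; rewrite -[RHS](nth_index [::] pL).
congr nth; apply: linkage_nth_inj pk ip (nth_find [::] hx) _.
by rewrite nth_index.
Qed.

Lemma path_index_nth i x : i < k -> x \in nth [::] L i -> path_index L x = i.
Proof.
move=> ik xi; have [pk e] := path_indexP (mem_nth_linkage ik) xi.
have xpi : x \in nth [::] L (path_index L x) by rewrite e.
exact: linkage_nth_inj pk ik xpi xi.
Qed.

Lemma linkage_mem_eq p q x : p \in L -> q \in L -> x \in p -> x \in q -> p = q.
Proof. by move=> pL qL xp xq; rewrite -(path_indexP pL xp).2 (path_indexP qL xq).2. Qed.

Lemma precedes_on p x y : precedes L x y -> p \in L -> x \in p ->
  y \in p /\ index x p < index y p.
Proof. by case=> q qL [xq yq lt] pL xp; rewrite (linkage_mem_eq pL qL xp xq). Qed.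

Lemma precedes_trans x y z : precedes L x y -> precedes L y z -> precedes L x z.
Proof.
move=> Hxy [q qL [yq zq lt]]; case: Hxy => p pL [xp yp lt1].
rewrite (linkage_mem_eq pL qL yp yq) in xp lt1.
by exists q => //; split=> //; apply: ltn_trans lt1 lt.
Qed.

Lemma precedes_nth x y : precedes L x y ->
  [/\ path_index L x < k, x \in nth [::] L (path_index L x),
      y \in nth [::] L (path_index L x),
      index x (nth [::] L (path_index L x)) < index y (nth [::] L (path_index L x))
    & path_index L y = path_index L x].
Proof.
move=> [p pL [xp yp lt]]; have [xk ex] := path_indexP pL xp.
by rewrite ex (path_index_nth xk) ?ex.
Qed.

Lemma arc_precedes x y : arc_of L x y -> precedes L x y.
Proof.
case=> p pL [i [lt ex ey]]; have [_ up _ _ _] := linkage_pathP pL.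
have li : i < size p by apply: ltn_trans lt.
have e1 := index_uniq x li up; have e2 := index_uniq x lt up.
rewrite ex in e1; rewrite ey in e2.
by exists p => //; rewrite -!index_mem e1 e2.
Qed.

Lemma path_edge_rel x y : symmetric F -> path_edge L x y -> F x y.
Proof.
move=> sF /hasP[p pL]; have [sp _ _ _ _] := linkage_pathP pL.
by case/orP=> /(sorted_adjacent sp) //; rewrite sF.
Qed.

Lemma linkage_path_edge_cases x y q : path_edge L x y -> q \in L ->
  [|| y \notin q, adjacent q x y | adjacent q y x].
Proof.
case/hasP=> p pL Hp qL; have [yq|//] := boolP (y \in q).
have yp : y \in p by case/orP: Hp => /adjacent_mem/andP[].
by rewrite (linkage_mem_eq qL pL yq yp) Hp orbT.
Qed.

Lemma arc_path_edge x y : arc_of L x y -> path_edge L x y.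
Proof.
by case=> p pL [i [lt ex ey]]; apply/hasP; exists p; rewrite // -ex -ey adjacent_nth.
Qed.

End Linkage.

Lemma linkage_path_intro (W : finType) (F : rel W) (S T : {set W}) x0 p :
  p != [::] -> sorted F p -> uniq p -> head x0 p \in S -> last x0 p \in T ->
  exists x s, [/\ p = x :: s, path F x s, uniq p, x \in S & last x s \in T].
Proof. by case: p => // x s _ ps up xS lT; exists x, s. Qed.

Lemma linkage_sorted_rel (W : finType) (F F' : rel W) (S T : {set W}) k L :
  linkage F S T k L -> (forall p, p \in L -> sorted F' p) -> linkage F' S T k L.
Proof.
move=> [sz [Hp Hd]] Hs; split=> //; split=> // p pL.
have [x [s [e ps up xS lT]]] := Hp p pL; exists x, s; split=> //.
by have := Hs p pL; rewrite e.
Qed.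

Lemma sorted_del_edge (W : finType) (F : rel W) u v s :
  sorted F s -> ~~ adjacent s u v -> ~~ adjacent s v u -> sorted (del_edge F u v) s.
Proof.
case: s => //= x s; elim: s x => //= y s IH x /andP[Fxy ps].
rewrite /adjacent /= !inE !negb_or => /andP[nuv Huv] /andP[nvu Hvu].
rewrite IH // andbT /del_edge Fxy /=.
by apply/negP=> /orP[] /andP[/eqP ex /eqP ey]; subst; rewrite eqxx in nuv nvu.
Qed.

Lemma sorted_del_edge_notin (W : finType) (F : rel W) u v s :
  sorted F s -> (u \notin s) || (v \notin s) -> sorted (del_edge F u v) s.
Proof.
move=> sFs nuv; apply: sorted_del_edge => //; apply/negP=> /adjacent_mem/andP[s1 s2];
  by move: nuv; rewrite s1 s2.
Qed.

Lemma linkage_del_edge (W : finType) (F : rel W) (S T : {set W}) k L x y :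
  linkage F S T k L -> ~~ path_edge L x y -> linkage (del_edge F x y) S T k L.
Proof.
move=> HL nxy; apply: (linkage_sorted_rel (HL)) => q qL.
have [sq _ _ _ _] := linkage_pathP HL qL.
by apply: sorted_del_edge sq _ _; apply: contra nxy => a; apply/hasP; exists q;
  rewrite ?a ?orbT.
Qed.

(** * Alternating cycles *)

Definition junction (W : eqType) (L : seq (seq W)) (p q : W * W) : bool :=
  path_edge L p.2 q.1.

(* Pairs (a_t, b_t), a_t before b_t on a path of [L1], where b_t a_{t+1}
   (indices mod n) is an edge of a path of [L2]. *)
Definition alt_cycle (W : eqType) (L1 L2 : seq (seq W)) (c : seq (W * W)) : Prop :=
  [/\ c != [::], forall ab, ab \in c -> precedes L1 ab.1 ab.2 & cycle (junction L2) c].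

Lemma path_junction_head (W : eqType) (L : seq (seq W)) p p' s :
  p.2 = p'.2 -> path (junction L) p s = path (junction L) p' s.
Proof. by case: s => //= q s; rewrite /junction => ->. Qed.

Lemma path_junction_last (W : eqType) (L : seq (seq W)) p s z z' :
  z.1 = z'.1 -> path (junction L) p (rcons s z) = path (junction L) p (rcons s z').
Proof. by move=> e; rewrite !rcons_path /junction e. Qed.

Lemma alt_cycle_rot (W : eqType) (L1 L2 : seq (seq W)) m c :
  alt_cycle L1 L2 c -> alt_cycle L1 L2 (rot m c).
Proof.
case=> c0 Hc cyc; split; last by rewrite rot_cycle.
- by rewrite -size_eq0 size_rot size_eq0.
- by move=> ab; rewrite mem_rot; apply: Hc.
Qed.

Section Shortcut.
Variables (W : finType) (F : rel W) (S T : {set W}) (k : nat) (L1 L2 : seq (seq W)).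
Hypothesis HL1 : linkage F S T k L1.

(* Both pairs lie on one path of [L1]; following that path from the earlier of
   the two relevant vertices bypasses one of the two arcs of the cycle. *)
Lemma alt_cycle_shortcut x B y C :
  alt_cycle L1 L2 (x :: B ++ y :: C) -> path_index L1 x.1 = path_index L1 y.1 ->
  exists c', alt_cycle L1 L2 c' /\ size c' < size (x :: B ++ y :: C).
Proof.
move=> [_ Hr]; rewrite /= rcons_cat cat_path => /andP[pB] /= /andP[Jy pC] e.
have [_ ax bx ltx _] := precedes_nth HL1 (Hr x (mem_head _ _)).
have yin : y \in x :: B ++ y :: C by rewrite inE mem_cat mem_head !orbT.
have [yk ay byy lty _] := precedes_nth HL1 (Hr y yin).
rewrite e in ax bx ltx; set Q := nth [::] L1 _ in ax bx ltx ay byy lty.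
have QL : Q \in L1 := mem_nth_linkage HL1 yk.
case: (ltnP (index x.1 Q) (index y.2 Q)) => hlt.
- exists ((x.1, y.2) :: C); split; last by rewrite /= size_cat /= ltnS; lia.
  split=> //.
  + move=> ab; rewrite inE => /orP[/eqP -> /=|abC]; first by exists Q.
    by apply: Hr; rewrite !(inE, mem_cat) abC !orbT.
  + rewrite /= (@path_junction_head _ _ _ y) //.
    by rewrite (@path_junction_last _ _ _ _ _ x).
- exists ((y.1, x.2) :: B); split; last by rewrite /= size_cat /= ltnS; lia.
  split=> //.
  + move=> ab; rewrite inE => /orP[/eqP -> /=|abB].
      by exists Q => //; split=> //; apply: ltn_trans lty (leq_ltn_trans hlt ltx).
    by apply: Hr; rewrite !(inE, mem_cat) abB !orbT.
  + rewrite /= (@path_junction_head _ _ _ x) //.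
    by rewrite (@path_junction_last _ _ _ _ _ y) // rcons_path pB.
Qed.

Lemma alt_cycle_shorten c : alt_cycle L1 L2 c ->
  ~~ uniq [seq path_index L1 ab.1 | ab <- c] ->
  exists c', alt_cycle L1 L2 c' /\ size c' < size c.
Proof.
move=> Hc /not_uniq_map_split [A [x [B [y [C [ec e]]]]]].
have erot : rot (size A) c = x :: B ++ y :: C ++ A.
  by rewrite ec rot_size_cat /= -catA.
have := alt_cycle_rot (size A) Hc; rewrite erot => /alt_cycle_shortcut /(_ e).
by rewrite -erot size_rot.
Qed.

End Shortcut.

Section Reroute.
Variables (W : finType) (F : rel W) (S T S' T' : {set W}) (k : nat).
Variables (L L' : seq (seq W)) (d : W * W) (cs : seq (W * W)).
Local Notation c := (d :: cs).
Hypothesis sF : symmetric F.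
Hypothesis HL : linkage F S T k L.
Hypothesis HL' : linkage F S' T' k L'.
Hypothesis c_cycle : alt_cycle L L' c.
Hypothesis c_uniq : uniq [seq path_index L ab.1 | ab <- c].

Local Notation n := (size c).
Local Notation P i := (nth [::] L i).
Local Notation a t := (nth d c t).1.
Local Notation b t := (nth d c t).2.
Local Notation pi t := (path_index L (a t)).
Local Notation succ t := (t.+1 %% n).
Local Notation owner i := (find (fun ab => path_index L ab.1 == i) c).
Local Notation upto t := (take (index (a t) (P (pi t))).+1 (P (pi t))).
Local Notation from t := (drop (index (b t) (P (pi t))) (P (pi t))).

(* Path [i] of [L] carrying the pair [s] is replaced by the initial segment of
   the path of the next pair up to its first vertex, then the junction edge,
   then the final segment of path [i] from [b s]. *)
Let rerouted (i : nat) : seq W :=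
  if owner i < n then upto (succ (owner i)) ++ from (owner i) else P i.

Let n_gt0 : 0 < n. Proof. by []. Qed.

Let pair_on_path t : t < n ->
  [/\ pi t < k, a t \in P (pi t), b t \in P (pi t),
      index (a t) (P (pi t)) < index (b t) (P (pi t)) & path_index L (b t) = pi t].
Proof.
move=> tn; case: c_cycle => _ Hp _; exact (precedes_nth HL (Hp _ (mem_nth d tn))).
Qed.

Let pi_inj t t' : t < n -> t' < n -> pi t = pi t' -> t = t'.
Proof.
move=> tn tn' e; apply/eqP; rewrite -(nth_uniq 0 _ _ c_uniq) ?size_map //.
by rewrite !(nth_map d) // e.
Qed.

Let succ_lt t : succ t < n.
Proof. exact: ltn_pmod. Qed.

Let succ_inj t t' : t < n -> t' < n -> succ t = succ t' -> t = t'.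
Proof.
have succE s : s < n -> succ s = if s.+1 == n then 0 else s.+1.
  by move=> sn; case: eqP => [->|ne]; rewrite ?modnn // modn_small //; lia.
by move=> tn tn'; rewrite !succE //; do 2 case: eqP; lia.
Qed.

Let junction_edge t : t < n -> path_edge L' (b t) (a (succ t)).
Proof.
case: c_cycle => _ _ /(cycle_nth d) Hc tn; exact: Hc tn.
Qed.

Let pi_owner i : owner i < n -> pi (owner i) = i.
Proof. by rewrite -has_find => /(nth_find d)/eqP. Qed.

Let owner_pi t : t < n -> owner (pi t) = t.
Proof.
move=> tn; have lt : owner (pi t) < n.
  by rewrite -has_find; apply/hasP; exists (nth d c t); rewrite ?mem_nth.
by apply: pi_inj => //; rewrite pi_owner.
Qed.

Let path_pi_inj t t' x : t < n -> t' < n -> x \in P (pi t) -> x \in P (pi t') -> t = t'.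
Proof.
move=> tn tn' xt xt'; have [k1 _ _ _ _] := pair_on_path tn.
have [k2 _ _ _ _] := pair_on_path tn'.
exact/pi_inj/(linkage_nth_inj HL k1 k2 xt xt').
Qed.

Let mem_upto t x : x \in upto t ->
  x \in P (pi t) /\ index x (P (pi t)) <= index (a t) (P (pi t)).
Proof. by move=> xt; have xP := mem_take xt; move: xt; rewrite in_take. Qed.

Let mem_from t x : t < n -> x \in from t ->
  x \in P (pi t) /\ index (b t) (P (pi t)) <= index x (P (pi t)).
Proof.
move=> tn xf; have [k1 _ _ _ _] := pair_on_path tn.
have [_ up _ _ _] := linkage_pathP HL (mem_nth_linkage HL k1).
by split; [apply: mem_drop xf | apply: index_drop_uniq].
Qed.

Let upto_from_disjoint t t' x : t < n -> t' < n -> x \in upto t -> x \in from t' -> False.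
Proof.
move=> tn tn' /mem_upto[x1 i1] /(mem_from tn')[x2 i2].
have ett := path_pi_inj tn tn' x1 x2; subst t'.
have [_ _ _ lt _] := pair_on_path tn.
by move: (leq_trans i2 i1); rewrite leqNgt lt.
Qed.

Let unowned_disjoint i t x : n <= owner i -> t < n -> x \in P (pi t) -> x \in P i -> False.
Proof.
move=> hi tn xt xi; have [k1 _ _ _ _] := pair_on_path tn.
have ik := linkage_mem_nth_lt HL xi.
by move: hi; rewrite -(linkage_nth_inj HL k1 ik xt xi) owner_pi // leqNgt tn.
Qed.

Let mem_rerouted (i : nat) x : x \in rerouted i ->
  if owner i < n then x \in upto (succ (owner i)) \/ x \in from (owner i) else x \in P i.
Proof. by rewrite /rerouted; case: ifP => // _; rewrite mem_cat => /orP. Qed.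

Let rerouted_disjoint (i j : nat) x : x \in rerouted i -> x \in rerouted j -> i = j.
Proof.
move=> /mem_rerouted + /mem_rerouted; case: ifP => hi; case: ifP => hj.
- move=> Hi Hj; suff e : owner i = owner j by rewrite -(pi_owner hi) -(pi_owner hj) e.
  case: Hi Hj => xi [] xj.
  + have [xi' _] := mem_upto xi; have [xj' _] := mem_upto xj.
    exact: (succ_inj hi hj (path_pi_inj (succ_lt _) (succ_lt _) xi' xj')).
  + by case: (upto_from_disjoint (succ_lt _) hj xi xj).
  + by case: (upto_from_disjoint (succ_lt _) hi xj xi).
  + exact: (path_pi_inj hi hj (mem_from hi xi).1 (mem_from hj xj).1).
- move=> Hi xj; have {}hj : n <= owner j by rewrite leqNgt hj.
  case: Hi => xi; [have [xi' _] := mem_upto xi | have [xi' _] := mem_from hi xi].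
    by case: (unowned_disjoint hj (succ_lt _) xi' xj).
  by case: (unowned_disjoint hj hi xi' xj).
- move=> xi Hj; have {}hi : n <= owner i by rewrite leqNgt hi.
  case: Hj => xj; [have [xj' _] := mem_upto xj | have [xj' _] := mem_from hj xj].
    by case: (unowned_disjoint hi (succ_lt _) xj' xi).
  by case: (unowned_disjoint hi hj xj' xi).
- move=> xi xj.
  exact (linkage_nth_inj HL (linkage_mem_nth_lt HL xi) (linkage_mem_nth_lt HL xj) xi xj).
Qed.

Let rerouted_path i : i < k -> exists x s,
  [/\ rerouted i = x :: s, path F x s, uniq (rerouted i), x \in S & last x s \in T].
Proof.
move=> ik; rewrite /rerouted; case: ifP => hs; last first.
  have [sP uP hP lP neP] := linkage_pathP HL (mem_nth_linkage HL ik).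
  exact: linkage_path_intro neP sP uP (hP (a 0)) (lP (a 0)).
set s := owner i; set t := succ s.
have [kt a_t _ _ _] := pair_on_path (succ_lt s).
have [ks _ bs _ _] := pair_on_path hs.
have [sQ uQ hQ _ neQ] := linkage_pathP HL (mem_nth_linkage HL kt).
have [sP uP _ lP _] := linkage_pathP HL (mem_nth_linkage HL ks).
have mQ : index (a t) (P (pi t)) < size (P (pi t)) by rewrite index_mem.
have jP : index (b s) (P (pi s)) < size (P (pi s)) by rewrite index_mem.
apply: (@linkage_path_intro _ _ _ _ (a 0)).
- by rewrite -size_eq0 size_cat size_takel.
- apply: (sorted_splice (x0 := a 0) mQ jP (take_sorted _ sQ) (drop_sorted _ sP)).
  by rewrite !nth_index // sF; exact (path_edge_rel HL' sF (junction_edge hs)).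
- rewrite cat_uniq take_uniq // drop_uniq // andbT; apply/hasPn => x xf.
  by apply/negP => xt; apply: upto_from_disjoint (succ_lt s) hs xt xf.
- by rewrite head_take_cat ?hQ // lt0n size_eq0.
- by rewrite last_cat_drop.
Qed.

Let rerouted_linkage : linkage F S T k [seq rerouted i | i <- iota 0 k].
Proof.
split; first by rewrite size_map size_iota.
split.
- by move=> p /mapP [i]; rewrite mem_iota add0n => /andP[_ ik] ->; apply: rerouted_path.
- move=> i j ik jk nij x; rewrite !(nth_map 0) ?size_iota // !nth_iota // !add0n => xi.
  by apply/negP => /(rerouted_disjoint xi) eij; rewrite eij eqxx in nij.
Qed.

(* The edge of [L] freed by rerouting: [a 0] and its successor on its path. *)
Local Notation u := (a 0).
Local Notation v := (nth u (P (pi 0)) (index u (P (pi 0))).+1).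

Let u_succ : (index u (P (pi 0))).+1 < size (P (pi 0)).
Proof.
by have [_ _ b0 lt _] := pair_on_path n_gt0; rewrite (leq_ltn_trans lt) ?index_mem.
Qed.

Let index_v : index v (P (pi 0)) = (index u (P (pi 0))).+1.
Proof.
have [k0 _ _ _ _] := pair_on_path n_gt0.
by have [_ up _ _ _] := linkage_pathP HL (mem_nth_linkage HL k0); rewrite index_uniq.
Qed.

Let upto_avoids t : t < n -> (u \notin upto t) || (v \notin upto t).
Proof.
move=> tn; have [_ u0 _ _ _] := pair_on_path n_gt0.
have [e|ne] := eqVneq t 0.
  by subst t; apply/orP; right; apply/negP=> /mem_upto[_]; rewrite index_v ltnn.
apply/orP; left; apply/negP=> /mem_upto[ut _].
by move: ne; rewrite (path_pi_inj tn n_gt0 ut u0) eqxx.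
Qed.

Let u_notin_from t : t < n -> u \notin from t.
Proof.
move=> tn; have [_ u0 _ lt0 _] := pair_on_path n_gt0; apply/negP=> /(mem_from tn)[ut].
by rewrite (path_pi_inj tn n_gt0 ut u0) leqNgt lt0.
Qed.

Let rerouted_avoids i :
  ~~ path_edge L' u v -> i < k -> sorted (del_edge F u v) (rerouted i).
Proof.
move=> nuv ik; have [_ u0 _ _ _] := pair_on_path n_gt0.
rewrite /rerouted; case: ifP => hs; last first.
  have [sP _ _ _ _] := linkage_pathP HL (mem_nth_linkage HL ik).
  apply: sorted_del_edge_notin sP _; apply/orP; left; apply/negP=> ui.
  by apply: (unowned_disjoint _ n_gt0 u0 ui); rewrite leqNgt hs.
set s := owner i; set t := succ s.
have [kt a_t _ _ _] := pair_on_path (succ_lt s).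
have [ks _ bs _ _] := pair_on_path hs.
have [sQ _ _ _ _] := linkage_pathP HL (mem_nth_linkage HL kt).
have [sP _ _ _ _] := linkage_pathP HL (mem_nth_linkage HL ks).
have mQ : index (a t) (P (pi t)) < size (P (pi t)) by rewrite index_mem.
have jP : index (b s) (P (pi s)) < size (P (pi s)) by rewrite index_mem.
apply: (sorted_splice (x0 := u) mQ jP).
- exact: sorted_del_edge_notin (take_sorted _ sQ) (upto_avoids (succ_lt s)).
- by apply: sorted_del_edge_notin (drop_sorted _ sP) _; rewrite u_notin_from.
- have Ebs := junction_edge hs; rewrite !nth_index // /del_edge sF.
  rewrite (path_edge_rel HL' sF Ebs) /=; apply/negP=> /orP[] /andP[/eqP ea /eqP eb].
  + by move: Ebs; rewrite ea eb path_edgeC (negbTE nuv).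
  + by move: Ebs; rewrite ea eb (negbTE nuv).
Qed.

Lemma alt_cycle_reroute :
  exists x y, path_edge L x y /\ (~~ path_edge L' x y -> routable (del_edge F x y) S T k).
Proof.
exists u, v; split.
  have [k0 u0 _ _ _] := pair_on_path n_gt0; apply/hasP; exists (P (pi 0)).
    exact (mem_nth_linkage HL k0).
  by rewrite -[X in adjacent _ X _](nth_index u u0) (adjacent_nth u u_succ).
move=> nuv; exists [seq rerouted i | i <- iota 0 k].
apply: linkage_sorted_rel rerouted_linkage _ => p /mapP [i].
by rewrite mem_iota add0n => /andP[_ ik] ->; apply: rerouted_avoids.
Qed.

End Reroute.

(* By induction on the length: a cycle meeting some path of [L1] twice can be
   shortened; otherwise rerouting frees an edge of [L1], which is not an edge of
   [L2] and can therefore be deleted. *)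
Lemma no_alt_cycle (W : finType) (F : rel W) (Sa Ta Sb Tb : {set W}) k L1 L2 :
  symmetric F -> linkage F Sa Ta k L1 -> linkage F Sb Tb k L2 ->
  (forall x y, F x y ->
     ~ (routable (del_edge F x y) Sa Ta k /\ routable (del_edge F x y) Sb Tb k)) ->
  (forall x y, path_edge L1 x y -> ~~ path_edge L2 x y) ->
  forall c, ~ alt_cycle L1 L2 c.
Proof.
move=> sF HL1 HL2 essential no_common c.
elim: {c}(size c).+1 {-2}c (ltnSn (size c)) => // N IH c lt Hc.
have [Hu|Hnu] := boolP (uniq [seq path_index L1 ab.1 | ab <- c]); last first.
  have [c' [Hc' lt']] := alt_cycle_shorten HL1 Hc Hnu.
  exact: IH c' (leq_trans lt' lt) Hc'.
case: c Hc Hu {lt} => [[]//|d cs] Hc Hu.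
have [x [y [Exy reroute]]] := alt_cycle_reroute sF HL1 HL2 Hc Hu.
have nExy := no_common _ _ Exy.
apply: (essential x y (path_edge_rel HL1 sF Exy)); split; first exact: reroute.
by exists L2; apply: linkage_del_edge.
Qed.

(** * Chains *)

Fixpoint alt_path (W : eqType) (L1 L2 : seq (seq W)) (x : W) (ps : seq (W * W)) (y : W)
    : Prop :=
  match ps with
  | [::] => path_edge L2 x y
  | ab :: ps' => [/\ path_edge L2 x ab.1, precedes L1 ab.1 ab.2 & alt_path L1 L2 ab.2 ps' y]
  end.

Lemma alt_path_junction (W : eqType) (L1 L2 : seq (seq W)) x ps y z w :
  alt_path L1 L2 y ps x -> path (junction L2) (z, y) (rcons ps (x, w)).
Proof.
elim: ps y z => [|[a b] ps IH] y z /=; first by rewrite /junction /= => ->.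
by case=> Hya _ /IH Hp; rewrite {1}/junction /= Hya Hp.
Qed.

Lemma alt_path_precedes (W : eqType) (L1 L2 : seq (seq W)) x ps y :
  alt_path L1 L2 y ps x -> forall ab, ab \in ps -> precedes L1 ab.1 ab.2.
Proof.
elim: ps y => [|[a b] ps IH] y //= [_ Hab Hp] ab.
by rewrite inE => /orP[/eqP -> //|]; apply: IH Hp ab.
Qed.

Lemma alt_path_cycle (W : eqType) (L1 L2 : seq (seq W)) x ps y :
  alt_path L1 L2 y ps x -> precedes L1 x y -> alt_cycle L1 L2 ((x, y) :: ps).
Proof.
move=> Hp Hxy; split=> //; last exact: alt_path_junction Hp.
by move=> ab; rewrite inE => /orP[/eqP -> //|]; apply: alt_path_precedes Hp ab.
Qed.

Lemma chain_swap (W : finType) (R B : seq (seq W)) c x s :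
  chain R B c x s -> chain B R (~~ c) x s.
Proof.
elim: s c x => [|y s IH] c x //= [Hxy Hs].
by split; [case: c Hxy {Hs} | apply: IH].
Qed.

Lemma chain_take (W : finType) (L1 L2 : seq (seq W)) m c x s :
  chain L1 L2 c x s -> chain L1 L2 c x (take m s).
Proof. by elim: s m c x => [|y s IH] [|m] c x //= [Hxy Hs]; split=> //; apply: IH. Qed.

Lemma chain_drop (W : finType) (L1 L2 : seq (seq W)) i c x s : i <= size s ->
  chain L1 L2 c x s -> chain L1 L2 (c (+) odd i) (nth x (x :: s) i) (drop i s).
Proof.
elim: i s c x => [|i IH] [|y s] c x //=; rewrite ?addbF ?drop0 // ltnS => lt [_ Hs].
by rewrite (set_nth_default y) // addbN -addNb; apply: IH.
Qed.

Section Chains.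
Variables (W : finType) (F : rel W) (S T : {set W}) (k : nat) (L1 L2 : seq (seq W)).
Hypothesis HL1 : linkage F S T k L1.
Hypothesis no_cycle : forall c, ~ alt_cycle L1 L2 c.

Lemma precedes_asym x y : precedes L1 x y -> ~ precedes L1 y x.
Proof.
case=> p pL [xp yp lt] /(precedes_on HL1) /(_ pL yp)[_].
by rewrite ltnNge (ltnW lt).
Qed.

(* Red arcs of a chain give pairs of an alternating path, blue arcs its junctions. *)
Lemma chain_alt_path c x s : s != [::] -> chain L1 L2 c x s ->
  (c /\ exists2 y, s = [:: y] & precedes L1 x y) \/
  exists y x' ps, [/\ if c then precedes L1 x y else y = x,
                      x' = last x s \/ precedes L1 x' (last x s)
                    & alt_path L1 L2 y ps x'].
Proof.
elim: s c x => [//|y [|z s] IH] c x _ [Hxy Hs].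
- case: c Hxy => /= Hxy.
  + by left; split=> //; exists y => //; exact (arc_precedes HL1 Hxy).
  + by right; exists x, y, [::]; split=> //; [left | exact: arc_path_edge Hxy].
- case: c Hxy Hs => Hxy /(IH _ _ isT).
    case=> [[//]|[y0 [x' [ps [/= -> Hl Hp]]]]].
    by right; exists y, x', ps; split=> //; exact (arc_precedes HL1 Hxy).
  have Exy : path_edge L2 x y by exact: arc_path_edge Hxy.
  case=> [[_ [z' [-> ->] Hyz]]|[y0 [x' [ps [Hy Hl Hp]]]]]; right.
    by exists x, y, [::]; split=> //; right.
  by exists x, x', ((y, y0) :: ps).
Qed.

Lemma chain_last_not_precedes c x s : s != [::] -> chain L1 L2 c x s ->
  ~ precedes L1 (last x s) x.
Proof.
move=> s0 Hch Hzx.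
case: (chain_alt_path s0 Hch) => [[_ [y ey Hxy]]|[y [x' [ps [Hy Hl Hp]]]]].
  by move: Hzx; rewrite ey; apply: precedes_asym.
have Hx'x : precedes L1 x' x.
  by case: Hl => [->|Hx'z] //; exact (precedes_trans HL1 Hx'z Hzx).
have Hx'y : precedes L1 x' y.
  by case: c Hy {Hch} => [/(precedes_trans HL1 Hx'x)|->].
exact: no_cycle (alt_path_cycle Hp Hx'y).
Qed.

Lemma chain_mem_not_precedes c x s y : chain L1 L2 c x s -> y \in s -> ~ precedes L1 y x.
Proof.
move=> Hch ys; have := chain_last_not_precedes _ (chain_take (index y s).+1 Hch).
rewrite (take_nth y) ?index_mem // last_rcons nth_index //; apply.
by rewrite -size_eq0 size_rcons.
Qed.

Lemma chain_index_lt c z0 zs P v v' : chain L1 L2 c z0 zs -> P \in L1 ->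
  v != v' -> v \in P -> v' \in P ->
  (exists i j, [/\ i < j, j < size (z0 :: zs),
                   nth z0 (z0 :: zs) i = v & nth z0 (z0 :: zs) j = v']) ->
  index v P < index v' P.
Proof.
move=> Hch PL nvv vP v'P [i [[|j] [//= ij jn ei ej]]].
rewrite ltn_neqAle; apply/andP; split.
  by apply: contra nvv => /eqP/(index_inj v vP v'P) ->.
rewrite leqNgt; apply/negP=> lt.
have iz : i <= size zs by lia.
have v'_after : v' \in drop i zs.
  rewrite -ej /= -(subnKC (ij : i <= j)) -nth_drop mem_nth // size_drop.
  exact (ltn_sub2r (leq_ltn_trans (ij : i <= j) jn) jn).
apply: (chain_mem_not_precedes (chain_drop iz Hch) v'_after).
by rewrite ei; exists P.
Qed.

End Chains.

(** * Minors *)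

Lemma singleton_branch_unique_nbr (V W : finType) (E : rel V) (F : rel W)
    (beta : W -> {set V}) w x a b :
  minor_model E F beta -> beta w = [set x] -> #|[set y | E x y]| = 1 ->
  F w a -> F w b -> a = b.
Proof.
case=> _ dis _ real bw /eqP/cards1P[y0 ey] Fa Fb; apply/eqP/negPn/negP=> nab.
have [xa [ya [+ ya_a Exa]]] := real _ _ Fa; have [xb [yb [+ yb_b Exb]]] := real _ _ Fb.
rewrite bw !inE => /eqP exa /eqP exb; subst xa xb.
have : ya \in [set y | E x y] by rewrite inE.
have : yb \in [set y | E x y] by rewrite inE.
rewrite ey !inE => /eqP e1 /eqP e2; subst ya yb.
by move: (dis _ _ nab) => /disjointFr /(_ ya_a); rewrite yb_b.
Qed.

Lemma linkage_unique_nbr_end (V W : finType) (F : rel W) (h : V -> W)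
    (D S T : {set V}) k L p x :
  symmetric F -> {in D &, injective h} -> S \subset D -> T \subset D -> x \in D ->
  linkage F (h @: S) (h @: T) k L -> p \in L -> h x \in p ->
  (forall a b, F (h x) a -> F (h x) b -> a = b) -> x \in S :|: T.
Proof.
move=> sF hinj /subsetP sSD /subsetP sTD xD HL pL xp Hx.
have [sp up hS lT _] := linkage_pathP HL pL.
case: (path_end_of_unique_nbr sF sp up xp Hx) => e.
- have /imsetP [y yS ey] := hS (h x); rewrite -e in ey.
  by rewrite (hinj _ _ xD (sSD _ yS) ey) inE yS.
- have /imsetP [y yT ey] := lT (h x); rewrite -e in ey.
  by rewrite (hinj _ _ xD (sTD _ yT) ey) inE yT orbT.
Qed.

Definition contr_rel (W : eqType) (F : rel W) (u v : W) : rel W :=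
  fun a b => (a != b) && [|| F a b, (a == u) && F v b | (b == u) && F a v].

Lemma sorted_contr_rel (W : eqType) (F : rel W) u v p :
  irreflexive F -> sorted F p -> uniq p -> u != v ->
  [|| v \notin p, adjacent p u v | adjacent p v u] ->
  sorted (contr_rel F u v) (filter (predC1 v) p).
Proof.
move=> irr sp up nuv.
have sub : subrel F (contr_rel F u v).
  by move=> a b Fab; rewrite /contr_rel Fab andbT; apply: contraTneq Fab => ->; rewrite irr.
case/or3P=> [vp|/adjacentP[s1 [s2 ep]]|/adjacentP[s1 [s2 ep]]].
- by rewrite filter_predC1_id //; apply: sub_sorted sp.
- subst p; have [_ us2 vs1 vs2] := uniq_cat_cons2 up.
  rewrite filter_cat /= eqxx (negbTE nuv) !filter_predC1_id //.
  move: sp; rewrite !sorted_cat_cons /= => /and3P[s1u Fuv pv].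
  rewrite (sub_sorted sub s1u); case: s2 us2 pv {vs2 up} => [|w s2] //=.
  rewrite inE negb_or => /andP[uw _] /andP[Fvw pw].
  by rewrite (sub_path sub pw) /contr_rel uw eqxx Fvw orbT.
- subst p; have [vs1 vs2 us1 us2] := uniq_cat_cons2 up.
  rewrite filter_cat /= eqxx nuv !filter_predC1_id //.
  move: sp; rewrite !sorted_cat_cons /= => /and3P[s1v Fvu pu].
  rewrite (sub_path sub pu) andbT; case/lastP: s1 s1v us1 {vs1 up} => [|s1 a] //.
  rewrite mem_rcons inE negb_or !sorted_rcons2 => /andP[s1a Fav] /andP[ua _].
  by rewrite (sub_sorted sub s1a) /contr_rel eq_sym ua eqxx Fav !orbT.
Qed.

Lemma linkage_contr (V W : finType) (F : rel W) (u v : W) (h : V -> W)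
    (h' : V -> {w : W | w != v}) (S T : {set V}) k (L : seq (seq W)) :
  irreflexive F -> u != v -> linkage F (h @: S) (h @: T) k L ->
  (forall x, x \in S :|: T -> val (h' x) = h x) ->
  (forall p, p \in L -> [|| v \notin p, adjacent p u v | adjacent p v u]) ->
  linkage (@contr_edge _ F u v) (h' @: S) (h' @: T) k [seq pmap insub p | p <- L].
Proof.
move=> irr nuv [sz [Hp Hd]] h'E Hadj; split; first by rewrite size_map.
split; last first.
  move=> i j ik jk nij x; rewrite !(nth_map [::]) ?sz // !mem_pmap_sub.
  exact: Hd ik jk nij (val x).
move=> _ /mapP[p pL ->].
have [x [s [ep ps up /imsetP[y yS ey] /imsetP[z zT ez]]]] := Hp p pL.
have h'y : val (h' y) = x by rewrite h'E ?inE ?yS.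
have h'z : val (h' z) = last x s by rewrite h'E ?inE ?zT ?orbT.
have xv : x != v by rewrite -h'y (valP (h' y)).
have lv : last x s != v by rewrite -h'z (valP (h' z)).
have valK : map val (pmap (insub : W -> option {w : W | w != v}) s) = filter (predC1 v) s.
  exact (etrans (pmap_filter (insubK _) s) (eq_filter (isSome_insub _) s)).
rewrite ep /= insubT /=; exists (Sub x xv), (pmap insub s); split=> //.
- have sp : sorted F p by rewrite ep.
  have := sorted_contr_rel irr sp up nuv (Hadj p pL).
  by rewrite ep /= xv -valK -[x]/(val (Sub x xv : {w : W | w != v})) -map_cons sorted_map.
- by have := pmap_sub_uniq {w : W | w != v} up; rewrite ep /= insubT.
- by apply/imsetP; exists y => //; apply: val_inj.
- apply/imsetP; exists z => //; apply: val_inj.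
  by rewrite h'z -(last_map val) valK last_filter.
Qed.

Definition contr_branch (V W : finType) (beta : W -> {set V}) (u v : W)
    (w : {w : W | w != v}) : {set V} :=
  beta (val w) :|: (if val w == u then beta v else set0).
Arguments contr_branch {V W} beta u v w.

Lemma connect_within_subset (V : finType) (E : rel V) (A B : {set V}) a b :
  A \subset B ->
  connect (fun x y => [&& E x y, x \in A & y \in A]) a b ->
  connect (fun x y => [&& E x y, x \in B & y \in B]) a b.
Proof.
move=> /subsetP sAB; apply: connect_sub => x y /and3P[Exy xA yA].
by apply: connect1; rewrite Exy !sAB.
Qed.

Lemma connect_branch_union (V W : finType) (E : rel V) (F : rel W)
    (beta : W -> {set V}) u v a b :
  symmetric E -> minor_model E F beta -> F u v ->
  a \in beta u :|: beta v -> b \in beta u :|: beta v ->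
  connect (fun x y => [&& E x y, x \in beta u :|: beta v & y \in beta u :|: beta v]) a b.
Proof.
move=> sE [_ _ con real] Fuv; have [a0 [b0 [a0u b0v Eab]]] := real _ _ Fuv.
have sU : beta u \subset beta u :|: beta v by rewrite subsetUl.
have sV : beta v \subset beta u :|: beta v by rewrite subsetUr.
have inU := connect_within_subset sU (con _ _ _ _ _).
have inV := connect_within_subset sV (con _ _ _ _ _).
set e := (X in connect X).
have a0b0 : a0 \in beta u :|: beta v /\ b0 \in beta u :|: beta v.
  by rewrite !inE a0u b0v orbT.
have uv : connect e a0 b0 by apply: connect1; rewrite /e Eab a0b0.1 a0b0.2.
have vu : connect e b0 a0 by apply: connect1; rewrite /e sE Eab a0b0.1 a0b0.2.
rewrite !inE => /orP[au|av] /orP[bu|bv].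
- exact: inU.
- exact: connect_trans (inU _ _ au a0u) (connect_trans uv (inV _ _ b0v bv)).
- exact: connect_trans (inV _ _ av b0v) (connect_trans vu (inU _ _ a0u bu)).
- exact: inV.
Qed.

Lemma minor_model_contr (V W : finType) (E : rel V) (F : rel W) (beta : W -> {set V}) u v :
  symmetric E -> minor_model E F beta -> F u v -> u != v ->
  minor_model E (@contr_edge _ F u v) (contr_branch beta u v).
Proof.
move=> sE mm Fuv nuv; have [ne dis con real] := mm.
have mem_cb z w : (z \in contr_branch beta u v w) =
    (z \in beta (val w)) || ((val w == u) && (z \in beta v)).
  by rewrite /contr_branch; case: ifP; rewrite !inE.
split.
- by move=> w; apply/set0Pn; have /set0Pn [x xb] := ne (val w); exists x; rewrite mem_cb xb.
- move=> w w' nww; have nv : val w != val w' by apply: contraNneq nww => /val_inj ->.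
  have vw := valP w; have vw' := valP w'.
  rewrite -setI_eq0 -subset0; apply/subsetP=> x; rewrite in_setI !mem_cb.
  case/andP=> /orP[xw|/andP[/eqP wu xv]] /orP[xw'|/andP[/eqP w'u xv']].
  + by rewrite (disjointFr (dis _ _ nv) xw) in xw'.
  + by rewrite (disjointFr (dis _ _ vw) xw) in xv'.
  + by rewrite (disjointFr (dis _ _ vw') xw') in xv.
  + by move: nv; rewrite wu w'u eqxx.
- move=> w a b; rewrite /contr_branch; case: ifP => [/eqP ->|_].
    exact: connect_branch_union sE mm Fuv.
  by rewrite setU0; apply: con.
- move=> w w' /andP[_ /or3P[Fww|/andP[/eqP wu Fvw]|/andP[/eqP w'u Fwv]]].
  + by have [a [b [ab bb Eab]]] := real _ _ Fww; exists a, b; rewrite !mem_cb ab bb.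
  + have [a [b [ab bb Eab]]] := real _ _ Fvw.
    by exists a, b; rewrite !mem_cb wu eqxx ab bb orbT.
  + have [a [b [ab bb Eab]]] := real _ _ Fwv.
    by exists a, b; rewrite !mem_cb w'u eqxx ab bb orbT.
Qed.

Lemma minor_model_subrel (V W : finType) (E : rel V) (F F' : rel W) (beta : W -> {set V}) :
  subrel F' F -> minor_model E F beta -> minor_model E F' beta.
Proof. by move=> sub [ne dis con real]; split=> // w w' /sub; apply: real. Qed.

Section MinimalMinor.
Variables (V : finType) (E : rel V) (S1 T1 S2 T2 : {set V}) (k : nat).
Variables (W : finType) (F : rel W) (h : V -> W) (R B : seq (seq W)).
Hypothesis sE : simple_graph E.
Hypothesis sF : simple_graph F.
Hypotheses (dS1S2 : [disjoint S1 & S2]) (dS1T2 : [disjoint S1 & T2]).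
Hypotheses (dT1S2 : [disjoint T1 & S2]) (dT1T2 : [disjoint T1 & T2]).
Hypothesis deg1 : forall x, x \in terminals S1 T1 S2 T2 -> #|[set y | E x y]| = 1.
Hypothesis Hmin : minimal_minor E S1 T1 S2 T2 k F h.
Hypothesis HR : linkage F (h @: S1) (h @: T1) k R.
Hypothesis HB : linkage F (h @: S2) (h @: T2) k B.

Local Notation D := (terminals S1 T1 S2 T2).

Let D1 : S1 :|: T1 \subset D.
Proof. by apply/subsetP=> x; rewrite !inE => /orP[]->; rewrite ?orbT. Qed.

Let D2 : S2 :|: T2 \subset D.
Proof. by apply/subsetP=> x; rewrite !inE => /orP[]->; rewrite ?orbT. Qed.

Lemma common_vertex_not_terminal x p q : p \in R -> q \in B ->
  h x \in p -> h x \in q -> x \notin D.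
Proof.
move=> pR qB xp xq; apply/negP=> xD; have [[beta [mm bt _ _]] _] := Hmin.
have hinj : {in D &, injective h} by move=> y z yD zD e; apply: set1_inj; rewrite -!bt // e.
have uniq_nbr a b := singleton_branch_unique_nbr (a := a) (b := b) mm (bt x xD) (deg1 xD).
have [sS1 sT1] : S1 \subset D /\ T1 \subset D by apply/andP; rewrite -subUset.
have [sS2 sT2] : S2 \subset D /\ T2 \subset D by apply/andP; rewrite -subUset.
have := linkage_unique_nbr_end sF.1 hinj sS1 sT1 xD HR pR xp uniq_nbr.
have := linkage_unique_nbr_end sF.1 hinj sS2 sT2 xD HB qB xq uniq_nbr.
rewrite !inE => /orP[x2|x2] /orP[x1|x1].
- by rewrite (disjointFr dS1S2 x1) in x2.
- by rewrite (disjointFr dT1S2 x1) in x2.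
- by rewrite (disjointFr dS1T2 x1) in x2.
- by rewrite (disjointFr dT1T2 x1) in x2.
Qed.

(* Otherwise the edge could be contracted: its ends are no terminals, and
   contracting it keeps both linkages. *)
Lemma no_common_edge u v : path_edge R u v -> ~~ path_edge B u v.
Proof.
move=> Ruv; apply/negP=> Buv.
have Fuv := path_edge_rel HR sF.1 Ruv.
have nuv : u != v by apply: contraTneq Fuv => ->; rewrite sF.2.
have [p pR /orP Hp] := hasP Ruv; have [q qB /orP Hq] := hasP Buv.
have [up vp] : u \in p /\ v \in p by case: Hp => /adjacent_mem/andP[] -> ->.
have [uq vq] : u \in q /\ v \in q by case: Hq => /adjacent_mem/andP[] -> ->.
have hD x : x \in D -> (h x != u) && (h x != v).
  move=> xD; apply/andP; split; apply: contraTneq xD => e;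
    by apply: common_vertex_not_terminal pR qB _ _; rewrite e.
have [[beta [mm bt _ _]] /(_ u v Fuv)[_ [[x xD hx]|contr_bad]]] := Hmin.
  by move: (hD x xD); rewrite hx eqxx andbF.
pose h' x := insubd (exist (fun w => w != v) u nuv) (h x).
have h'E x : x \in D -> val (h' x) = h x.
  by move=> xD; rewrite val_insubd; case/andP: (hD x xD) => _ ->.
apply: (contr_bad h' h'E); exists (contr_branch beta u v); split.
- exact (minor_model_contr sE.1 mm Fuv nuv).
- move=> x xD; rewrite /contr_branch h'E //; case/andP: (hD x xD) => /negbTE -> _.
  by rewrite setU0 bt.
- exists [seq pmap insub p | p <- R]; apply: (linkage_contr sF.2 nuv HR).
    by move=> x /(subsetP D1)/h'E.
  by move=> r rR; exact (linkage_path_edge_cases HR Ruv rR).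
- exists [seq pmap insub p | p <- B]; apply: (linkage_contr sF.2 nuv HB).
    by move=> x /(subsetP D2)/h'E.
  by move=> r rB; exact (linkage_path_edge_cases HB Buv rB).
Qed.

Lemma edge_essential u v : F u v ->
  ~ (routable (del_edge F u v) (h @: S1) (h @: T1) k /\
     routable (del_edge F u v) (h @: S2) (h @: T2) k).
Proof.
move=> Fuv [R' B']; have [[beta [mm bt _ _]] /(_ u v Fuv)[del_bad _]] := Hmin.
apply: del_bad; exists beta; split=> //.
by apply: minor_model_subrel mm => a b /andP[].
Qed.

Lemma no_alt_cycle_RB c : ~ alt_cycle R B c.
Proof. exact: no_alt_cycle sF.1 HR HB edge_essential no_common_edge c. Qed.

Lemma no_alt_cycle_BR c : ~ alt_cycle B R c.
Proof.
apply: no_alt_cycle sF.1 HB HR _ _ c.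
  by move=> u v /edge_essential nuv [? ?]; apply: nuv.
by move=> u v Buv; apply: contraL Buv => /no_common_edge.
Qed.

End MinimalMinor.

Theorem claim2p6 (V : finType) (E : rel V) (S1 T1 S2 T2 : {set V}) (k : nat)
    (W : finType) (F : rel W) (h : V -> W) (R B : seq (seq W)) :
  simple_graph E ->
  #|S1| = k -> #|T1| = k -> #|S2| = k -> #|T2| = k ->
  [disjoint S1 & T1] -> [disjoint S1 & S2] -> [disjoint S1 & T2] ->
  [disjoint T1 & S2] -> [disjoint T1 & T2] -> [disjoint S2 & T2] ->
  (forall x, x \in terminals S1 T1 S2 T2 -> #|[set y | E x y]| = 1) ->
  routable E S1 T1 k -> routable E S2 T2 k ->
  simple_graph F ->
  minimal_minor E S1 T1 S2 T2 k F h ->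
  linkage F (h @: S1) (h @: T1) k R ->
  linkage F (h @: S2) (h @: T2) k B ->
  forall (c : bool) (z0 : W) (zs : seq W), chain R B c z0 zs ->
  forall P : seq W, (P \in R) || (P \in B) ->
  forall v v' : W, v != v' -> v \in P -> v' \in P ->
  (exists i j, [/\ i < j, j < size (z0 :: zs),
                   nth z0 (z0 :: zs) i = v & nth z0 (z0 :: zs) j = v']) ->
  index v P < index v' P.
Proof.
move=> sE _ _ _ _ _ dS1S2 dS1T2 dT1S2 dT1T2 _ deg1 _ _ sF Hmin HR HB c z0 zs Hch P.
have no_cycle_RB := no_alt_cycle_RB sE sF dS1S2 dS1T2 dT1S2 dT1T2 deg1 Hmin HR HB.
have no_cycle_BR := no_alt_cycle_BR sE sF dS1S2 dS1T2 dT1S2 dT1T2 deg1 Hmin HR HB.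
case/orP=> [PR|PB] v v' nvv vP v'P.
  exact (chain_index_lt HR no_cycle_RB Hch PR nvv vP v'P).
exact (chain_index_lt HB no_cycle_BR (chain_swap Hch) PB nvv vP v'P).
Qed.
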